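(* Fix an integer base $B\ge 2$. For every integer $k>0$ there are infinitely many positive integers $n$ with $h(n)\le -k$.
   Context: For a positive integer $n$, $\delta(n)$ is the number of digits of $n$ in base $B$, i.e. $\delta(n)=k$ iff $B^{k-1}\le n<B^k$. Define $\delta'(1)=0$ and $\delta'(a)=\delta(a)$ for $a>1$. If $n=\prod_{i} p_i^{a_i}$ is the prime power factorisation, set $\phi(n)=\sum_i \big(\delta(p_i)+\delta'(a_i)\big)$ (with $\phi(1)=0$), and $h(n)=\delta(n)-\phi(n)$. *)

From mathcomp Require Import all_boot all_order all_algebra.
Set Implicit Arguments. Unset Strict Implicit. Unset Printing Implicit Defensive.
Import GRing.Theory Num.Theory.

(* delta B n : number of digits of n in base B, i.e. the k with
   B^(k-1) <= n < B^k (for n >= 1, B >= 2). trunc_log B n is the largest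
   e with B^e <= n, hence delta = trunc_log B n + 1. *)
Definition delta (B n : nat) : nat := (trunc_log B n).+1.

Definition delta' (B a : nat) : nat := if a == 1 then 0 else delta B a.

Definition phi (B n : nat) : nat :=
  \sum_(pa <- prime_decomp n) (delta B pa.1 + delta' B pa.2).

Definition h (B n : nat) : int := (delta B n)%:Z - (phi B n)%:Z.

(* If p_1, ..., p_M are distinct primes with
   B^(J+i) < p_i <= (127/64) B^(J+i), then phi of their product n is at least
   sum_i (J+i+1), while n < (127/64)^M B^(sum_i (J+i)), so that n has at most
   sum_i (J+i) + M log_B (127/64) + 1 digits.  As 127/64 < 2 <= B, taking
   M >= 127 B^k gives h n <= -k.
   Such primes exist above 2^17 by an Erdos-style argument: if (32u, 63u]
   contained no prime, the p-adic valuations of C(64u, 32u) would give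
   C(64u, 32u) <= (64u)^(sqrt (64u)) 4^(64u/3) C(64u, u), which contradicts
   4^(32u) <= (64u+1) C(64u, 32u) and C(64u, u) 63^(63u) <= 64^(64u)
   once u >= 2^12. *)

From mathcomp Require Import all_boot all_order all_algebra.
From mathcomp Require Import zify.
Set Implicit Arguments. Unset Strict Implicit. Unset Printing Implicit Defensive.

Lemma divn_eq_between q m d : q * d <= m < q.+1 * d -> m %/ d = q.
Proof.
case/andP=> lo hi; have d_gt0 : 0 < d by case: d {lo} hi; rewrite ?muln0.
by apply/eqP; rewrite eqn_leq -ltnS ltn_divLR // hi leq_divRL.
Qed.

Lemma big_divn_expn_widen p m R S : 0 < p -> m < p ^ R -> R <= S ->
  \sum_(1 <= k < S) m %/ p ^ k = \sum_(1 <= k < R) m %/ p ^ k.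
Proof.
move=> p_gt0 mR; elim: S => [|S IHS]; first by rewrite leqn0 => /eqP->.
rewrite leq_eqVlt => /orP[/eqP-> // | RS]; rewrite -IHS // {IHS}.
case: S RS => [|S] RS; first by rewrite !big_geq.
rewrite big_nat_recr //= divn_small ?addn0 //.
by apply: leq_trans mR _; rewrite leq_pexp2l.
Qed.

Lemma logn_fact_small p m R : prime p -> m < p ^ R ->
  logn p m`! = \sum_(1 <= k < R) m %/ p ^ k.
Proof.
move=> p_pr mR; have p_gt0 := prime_gt0 p_pr.
have m_lt : m < p ^ m.+1.
  by apply: leq_trans (ltn_expl m (prime_gt1 p_pr)) _; rewrite leq_pexp2l.
rewrite logn_fact //; case: (leqP R m.+1) => [R_le | /ltnW R_ge].
  exact: big_divn_expn_widen.
by rewrite (big_divn_expn_widen p_gt0 m_lt R_ge).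
Qed.

Lemma logn_bin_sum p n m R : prime p -> m <= n -> n < p ^ R ->
  logn p 'C(n, m) + \sum_(1 <= k < R) m %/ p ^ k
    + \sum_(1 <= k < R) (n - m) %/ p ^ k = \sum_(1 <= k < R) n %/ p ^ k.
Proof.
move=> p_pr mn nR; have /(congr1 (logn p)) := bin_fact mn.
rewrite !lognM ?bin_gt0 ?muln_gt0 ?fact_gt0 // addnA.
by rewrite !(@logn_fact_small p _ R) // (leq_ltn_trans _ nR) ?leq_subr.
Qed.

Lemma pfactor_logn_bin_le p n m : prime p -> m <= n -> 0 < n ->
  p ^ logn p 'C(n, m) <= n.
Proof.
move=> p_pr mn n_gt0; have p_gt1 := prime_gt1 p_pr.
set T := trunc_log p n.
have := logn_bin_sum p_pr mn (trunc_log_ltn n p_gt1); rewrite -/T => legendre.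
have carries : \sum_(1 <= k < T.+1) n %/ p ^ k <=
    \sum_(1 <= k < T.+1) (m %/ p ^ k + (n - m) %/ p ^ k + 1).
  by apply: leq_sum => k _; rewrite -{1}(subnKC mn) leq_divDl.
rewrite !big_split /= sum_nat_const_nat subn1 muln1 in carries.
apply: leq_trans (trunc_logP p_gt1 n_gt0); rewrite leq_pexp2l ?prime_gt0 //.
lia.
Qed.

Lemma logn_bin_lt_sq p n m : prime p -> m <= n -> n < p * p ->
  logn p 'C(n, m) = n %/ p - m %/ p - (n - m) %/ p.
Proof.
move=> p_pr mn n_lt; have := @logn_bin_sum p n m 2 p_pr mn.
rewrite !big_nat1 !expn1 => /(_ n_lt).
by move: (logn _ _) (n %/ p) (m %/ p) ((n - m) %/ p) => v a b c; lia.
Qed.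

Lemma mul_bin_odd_mid n : n.+1 * 'C(n.*2.+1, n) = n.*2.+1 * 'C(n.*2, n).
Proof.
rewrite [RHS](mul_bin_diag n.*2.+1 n) -[in RHS](@bin_sub n.*2.+1 n.+1); last lia.
by congr (_ * 'C(_, _)); lia.
Qed.

Lemma bin_mid_succ n : 'C(n.+1.*2, n.+1) = 2 * 'C(n.*2.+1, n).
Proof.
apply/eqP; rewrite -(eqn_pmul2l (ltn0Sn n)) -mul_bin_diag doubleS /=.
by rewrite mulnA muln2 doubleS.
Qed.

Lemma expn4_le_bin_mid n : 4 ^ n <= n.*2.+1 * 'C(n.*2, n).
Proof.
elim: n => [|n IHn]; first by rewrite bin0.
rewrite -(leq_pmul2l (ltn0Sn n)) mulnCA bin_mid_succ (mulnCA n.+1 2).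
rewrite mul_bin_odd_mid.
by rewrite expnS mulnA [leqRHS]mulnA leq_mul //; lia.
Qed.

Lemma bin_odd_mid_le n : 'C(n.*2.+1, n) <= 4 ^ n.
Proof.
elim: n => [|n IHn]; first by rewrite bin0.
rewrite -(leq_pmul2l (ltn0Sn n.+1)) mul_bin_odd_mid bin_mid_succ.
by rewrite mulnA expnS [leqRHS]mulnA leq_mul //; lia.
Qed.

Lemma bin_entropy_le a b : 'C(a + b, b) * (a ^ a * b ^ b) <= (a + b) ^ (a + b).
Proof.
rewrite [X in _ <= X]expnDn (bigD1 (@Ordinal (a + b).+1 b (leq_addl a b))) //=.
by rewrite addnK leq_addr.
Qed.

Lemma prod_primes_dvdn (s : seq nat) m :
  uniq s -> all prime s -> all (dvdn^~ m) s -> \prod_(p <- s) p %| m.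
Proof.
elim: s => [|p s IHs] /=; first by rewrite big_nil dvd1n.
case/andP=> p_notin_s s_uniq /andP[p_pr s_pr] /andP[p_dvd s_dvd].
rewrite big_cons Gauss_dvd ?p_dvd ?IHs // prime_coprime // Euclid_dvd_prod //.
rewrite big_has; apply/hasPn => q q_in_s; have q_pr := allP s_pr q q_in_s.
by rewrite dvdn_prime2 //; apply: contraNneq p_notin_s => ->.
Qed.

Definition primorial n := \prod_(0 <= p < n.+1 | prime p) p.

Lemma primorial0 : primorial 0 = 1.
Proof. by rewrite /primorial big_mkcond big_nat1. Qed.

Lemma primorialS n :
  primorial n.+1 = primorial n * (if prime n.+1 then n.+1 else 1).
Proof. by rewrite /primorial big_mkcond big_nat_recr //= -big_mkcond. Qed.

Lemma primorial_odd k : primorial k.*2.+1 =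
  primorial k.+1 * \prod_(k.+2 <= p < k.*2.+2 | prime p) p.
Proof. by rewrite /primorial (@big_cat_nat _ _ _ k.+2) //; lia. Qed.

Lemma prod_primes_mid_dvd_bin k :
  \prod_(k.+2 <= p < k.*2.+2 | prime p) p %| 'C(k.*2.+1, k).
Proof.
rewrite -big_filter; apply: prod_primes_dvdn.
- exact/filter_uniq/iota_uniq.
- exact: filter_all.
apply/allP => p; rewrite mem_filter mem_index_iota => /andP[p_pr /andP[lo hi]].
have p_gt0 := prime_gt0 p_pr.
have k_le : k <= k.*2.+1 by lia.
have : 0 < logn p 'C(k.*2.+1, k).
  rewrite (logn_bin_lt_sq p_pr k_le); last by nia.
  by rewrite (@divn_eq_between 1) ?divn_small //; lia.
by rewrite -[p in p %| _]expn1 pfactor_dvdn // bin_gt0.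
Qed.

Lemma primorial_le n : primorial n <= 4 ^ n.
Proof.
elim/ltn_ind: n => -[|m] IH; first by rewrite primorial0.
have [m_pr | m_npr] := boolP (prime m.+1); last first.
  by rewrite primorialS (negPf m_npr) muln1 (leq_trans (IH m _)) ?leq_pexp2l.
have [m_eq2 | m_odd] := even_prime m_pr.
  by rewrite m_eq2 primorialS primorialS primorial0.
have k_gt0 : 0 < m./2 by case: m {IH} m_pr m_odd => [|[|m]].
have m_even : odd m = false by move: m_odd => /= /negPf.
have -> : m.+1 = m./2.*2.+1 by rewrite -[in LHS](odd_double_half m) m_even.
set k := m./2 in k_gt0 *.
rewrite primorial_odd (_ : 4 ^ k.*2.+1 = 4 ^ k.+1 * 4 ^ k); last first.
  by rewrite -expnD; congr (_ ^ _); lia.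
rewrite leq_mul ?(IH k.+1) //; first lia.
apply: leq_trans (bin_odd_mid_le _).
by apply: dvdn_leq (prod_primes_mid_dvd_bin _); rewrite bin_gt0; lia.
Qed.

Lemma prod_pfactor_logn m M : 0 < m -> m <= M ->
  \prod_(0 <= p < M.+1) p ^ logn p m = m.
Proof.
move=> m_gt0 mM; rewrite -[RHS](partnT m_gt0) (widen_partn _ mM).
exact: eq_bigl.
Qed.

Section NoPrimeIn32to63.

Variables u r : nat.
Hypothesis u_gt0 : 0 < u.
Hypothesis r_sq_gt : 64 * u < r * r.
Hypothesis no_prime : forall q, 32 * u < q <= 63 * u -> ~~ prime q.

Lemma pfactor_logn_bin_mid_large p : prime p -> r <= p ->
  p ^ logn p 'C(64 * u, 32 * u) <=
    (if p <= 64 * u %/ 3 then p else 1) * p ^ logn p 'C(64 * u, u).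
Proof.
move=> p_pr r_le_p; have p_gt1 := prime_gt1 p_pr; have p_gt0 := ltnW p_gt1.
have sq_gt : 64 * u < p * p by apply: leq_trans r_sq_gt (leq_mul r_le_p r_le_p).
have v_le1 : logn p 'C(64 * u, 32 * u) <= 1.
  rewrite -ltnS -(@ltn_exp2l p) //; apply: leq_ltn_trans sq_gt.
  by apply: pfactor_logn_bin_le; lia.
have v_eq : logn p 'C(64 * u, 32 * u) = 64 * u %/ p - 32 * u %/ p - 32 * u %/ p.
  by rewrite logn_bin_lt_sq //; [congr (_ - _ %/ p) | ]; lia.
(* Above 64u/3, only the primes of (63u, 64u] divide C(64u, 32u), and they
   divide C(64u, u) as well. *)
case: (leqP p (64 * u %/ 3)) => [_ | p_gt_third].
  apply: (@leq_trans p); last exact: leq_pmulr (pfactor_gt0 _ _).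
  by rewrite -[leqRHS](expn1 p) leq_exp2l.
rewrite mul1n; rewrite ltn_divLR // in p_gt_third.
have [p_le_half | p_gt_half] := leqP p (32 * u).
  by rewrite v_eq (@divn_eq_between 2) ?(@divn_eq_between 1) ?pfactor_gt0 //; lia.
have [p_le | p_gt] := leqP p (63 * u).
  by have := @no_prime p; rewrite p_gt_half p_le p_pr => /(_ isT).
have [p_le_full | p_gt_full] := leqP p (64 * u); last first.
  by rewrite v_eq !divn_small ?expn0 ?pfactor_gt0.
have -> : logn p 'C(64 * u, u) = 1.
  by rewrite logn_bin_lt_sq ?(@divn_eq_between 1 (64 * u)) ?divn_small; lia.
by rewrite leq_exp2l.
Qed.

Lemma pfactor_logn_bin_mid_le p :
  p ^ logn p 'C(64 * u, 32 * u) <=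
    (if p < r then 64 * u else 1)
    * (if prime p && (p <= 64 * u %/ 3) then p else 1)
    * p ^ logn p 'C(64 * u, u).
Proof.
have [p_pr | p_npr] := boolP (prime p); last first.
  rewrite lognE (negPf p_npr) /= !muln_gt0 pfactor_gt0 andbT andbT.
  by case: ifP; rewrite // muln_gt0 u_gt0.
rewrite /=; have [p_lt_r | r_le_p] := ltnP p r.
  apply: leq_trans (pfactor_logn_bin_le _ _ _) _; try lia.
  rewrite -mulnA leq_pmulr // muln_gt0 pfactor_gt0 andbT.
  by case: ifP => _ //; exact: prime_gt0.
by rewrite mul1n; apply: pfactor_logn_bin_mid_large.
Qed.

Lemma bin_mid_le_of_no_prime :
  'C(64 * u, 32 * u) <= (64 * u) ^ r * primorial (64 * u %/ 3) * 'C(64 * u, u).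
Proof.
set M := 'C(64 * u, 32 * u) + 'C(64 * u, u) + r + 64 * u.
have [C1_gt0 C2_gt0] : 0 < 'C(64 * u, 32 * u) /\ 0 < 'C(64 * u, u).
  by rewrite !bin_gt0; lia.
rewrite -{1}(@prod_pfactor_logn _ M C1_gt0); last by rewrite /M; lia.
rewrite -[in leqRHS](@prod_pfactor_logn _ M C2_gt0); last by rewrite /M; lia.
have small_part :
    \prod_(0 <= p < M.+1) (if p < r then 64 * u else 1) = (64 * u) ^ r.
  rewrite -[in RHS](subn0 r) -prod_nat_const_nat (@big_nat_widen _ _ _ 0 r M.+1).
    by rewrite [RHS]big_mkcond.
  by rewrite /M; lia.
have middle_part :
    \prod_(0 <= p < M.+1) (if prime p && (p <= 64 * u %/ 3) then p else 1)
      = primorial (64 * u %/ 3).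
  rewrite /primorial (@big_nat_widen _ _ _ 0 (64 * u %/ 3).+1 M.+1).
    by rewrite [RHS]big_mkcond.
  by rewrite /M ltnS (leq_trans (leq_div _ 3)) //; lia.
apply: leq_trans (leq_prod (fun p _ => pfactor_logn_bin_mid_le p)) _.
by rewrite !big_split /= small_part middle_part.
Qed.

Lemma expn_bound_of_no_prime :
  4 ^ (32 * u) * 63 ^ (63 * u) <=
    (64 * u).+1 * (64 * u) ^ r * 4 ^ (64 * u %/ 3) * 64 ^ (64 * u).
Proof.
have lower := expn4_le_bin_mid (32 * u).
rewrite (_ : (32 * u).*2 = 64 * u) in lower; last lia.
have entropy := bin_entropy_le (63 * u) u.
rewrite (_ : 63 * u + u = 64 * u) in entropy; last lia.
have key : 4 ^ (32 * u) * ((63 * u) ^ (63 * u) * u ^ u) <=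
    (64 * u).+1 * ((64 * u) ^ r * 4 ^ (64 * u %/ 3) * (64 * u) ^ (64 * u)).
  apply: leq_trans (leq_mul lower (leqnn _)) _; rewrite -mulnA leq_pmul2l //.
  apply: leq_trans (leq_mul bin_mid_le_of_no_prime (leqnn _)) _.
  by rewrite -mulnA; apply: leq_mul entropy; apply: leq_mul (primorial_le _).
have split_u : (63 * u) ^ (63 * u) * u ^ u = 63 ^ (63 * u) * u ^ (64 * u).
  by rewrite expnMn -mulnA -expnD; congr (_ * _ ^ _); lia.
rewrite split_u [(64 * u) ^ (64 * u)]expnMn !mulnA in key.
by rewrite leq_pmul2r ?expn_gt0 ?u_gt0 in key.
Qed.

Lemma exp2_le_of_no_prime : 2 ^ (13 * u) <= (64 * u).+1 * (64 * u) ^ r.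
Proof.
have := expn_bound_of_no_prime; set Y := (64 * u).+1 * _.
have pow4 x : 4 ^ x = 2 ^ (2 * x) by rewrite expnM.
have pow64 : 64 ^ (64 * u) = 2 ^ (384 * u).
  by rewrite (_ : 384 * u = 6 * (64 * u)) ?expnM //; lia.
rewrite !pow4 pow64 => bound.
have pow63 : 2 ^ (376 * u) <= 63 ^ (63 * u).
  by rewrite !expnM leq_exp2r; lia.
have third : 2 * (64 * u %/ 3) <= 43 * u by have := leq_divM (64 * u) 3; lia.
rewrite -(@leq_pmul2r (2 ^ (427 * u))) ?expn_gt0 //.
apply: leq_trans (leq_trans _ bound) _.
  rewrite -expnD (_ : 13 * u + 427 * u = 2 * (32 * u) + 376 * u); last lia.
  by rewrite expnD leq_mul.
by rewrite -mulnA leq_mul // -expnD leq_exp2l //; lia.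
Qed.

End NoPrimeIn32to63.

Lemma linear_le_exp2 a : 6 <= a -> 4 * a + 16 <= 2 ^ a.
Proof.
elim: a => // a IHa; rewrite leq_eqVlt => /orP[/eqP <- // | /IHa].
by rewrite expnS; lia.
Qed.

Lemma exp2_sq_gt a : 6 <= a ->
  (2 * a + 8) * (2 ^ (a + 4) + 1) < 13 * (2 ^ a * 2 ^ a).
Proof.
move/linear_le_exp2; rewrite expnD; set X := 2 ^ a; nia.
Qed.

Lemma exists_prime_32_63 u : 2 ^ 12 <= u ->
  exists2 p, prime p & 32 * u < p <= 63 * u.
Proof.
move=> u_ge; have u_gt0 : 0 < u by apply: leq_trans u_ge.
have [/hasP[p] | /hasPn no_prime] :=
  boolP (has prime (index_iota (32 * u).+1 (63 * u).+1)).
  by rewrite mem_index_iota => p_in p_pr; exists p.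
exfalso; have {}no_prime q : 32 * u < q <= 63 * u -> ~~ prime q.
  by move=> q_in; apply: no_prime; rewrite mem_index_iota.
(* r is just above sqrt (64 u). *)
set L := trunc_log 2 u; set a := L./2; set r := 2 ^ (a + 4).
have u_lo : 2 ^ L <= u := trunc_logP (isT : 1 < 2) u_gt0.
have u_hi : u < 2 ^ L.+1 := trunc_log_ltn u (isT : 1 < 2).
have L_ge : 12 <= L := trunc_log_max (isT : 1 < 2) u_ge.
have L_a : L = odd L + a.*2 by rewrite odd_double_half.
have N_lt : 64 * u < 2 ^ (L + 7) by rewrite expnD (expnS 2 L) in u_hi *; lia.
have r_sq : 64 * u < r * r.
  by apply: leq_trans N_lt _; rewrite -expnD leq_exp2l //; lia.
have := exp2_le_of_no_prime u_gt0 r_sq no_prime.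
have Y_le : (64 * u).+1 * (64 * u) ^ r <= 2 ^ ((L + 7) * r.+1).
  rewrite mulnS expnD leq_mul // expnM leq_exp2r ?expn_gt0 //; exact: ltnW.
move=> /leq_trans /(_ Y_le); rewrite leq_exp2l // => u_le.
have odd_le := leq_b1 (odd L).
have a_ge : 6 <= a by lia.
have aa_le : 2 ^ a * 2 ^ a <= u.
  by rewrite -expnD (leq_trans _ u_lo) ?leq_exp2l //; lia.
have := exp2_sq_gt a_ge; rewrite -/r; lia.
Qed.

Lemma exists_prime_digits x : 2 ^ 17 <= x ->
  exists p, [&& prime p, x < p & 64 * p <= 127 * x].
Proof.
move=> x_ge; have [|p p_pr range] := @exists_prime_32_63 (x %/ 32).+1; first lia.
by exists p; rewrite p_pr /=; lia.
Qed.

Lemma delta_eq B j x : 1 < B -> B ^ j <= x < B ^ j.+1 -> delta B x = j.+1.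
Proof. by move=> B_gt1 range; rewrite /delta (trunc_log_eq B_gt1 range). Qed.

Lemma primes_prod_uniq s : uniq s -> all prime s ->
  perm_eq (primes (\prod_(p <- s) p)) s.
Proof.
move=> s_uniq s_pr; apply: uniq_perm; rewrite ?primes_uniq // => q.
have prod_gt0 : 0 < \prod_(p <- s) p.
  by rewrite big_seq; apply: prodn_cond_gt0 => p /(allP s_pr)/prime_gt0.
rewrite mem_primes prod_gt0 /=; apply/idP/idP => [/andP[q_pr] | q_in_s].
  rewrite Euclid_dvd_prod // big_has => /hasP[p p_in_s].
  by rewrite dvdn_prime2 ?(allP s_pr p p_in_s) // => /eqP->.
by rewrite (allP s_pr) //= (big_rem q) //= dvdn_mulr.
Qed.

Lemma phi_ge_sum_delta B n : \sum_(p <- primes n) delta B p <= phi B n.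
Proof.
by rewrite /phi prime_decompE big_map; apply: leq_sum => p _; apply: leq_addr.
Qed.

Lemma sum_delta_le_phi_prod B s : uniq s -> all prime s ->
  \sum_(p <- s) delta B p <= phi B (\prod_(p <- s) p).
Proof.
move=> s_uniq s_pr; rewrite -(perm_big _ (primes_prod_uniq s_uniq s_pr)).
exact: phi_ge_sum_delta.
Qed.

Lemma bernoulli_nat a M : a ^ M * (a + M) <= a * (a + 1) ^ M.
Proof.
elim: M => [|M IHM]; first by rewrite addn0 mul1n muln1.
by rewrite !expnS; move: IHM; move: (a ^ M) ((a + 1) ^ M) => x y; nia.
Qed.

Lemma expn127_mul_lt c M : 127 * c <= M -> 127 ^ M * c < 128 ^ M.
Proof.
move=> cM; rewrite -(ltn_pmul2l (isT : 0 < 127)).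
apply: leq_trans (bernoulli_nat 127 M).
by rewrite mulnCA ltn_pmul2l ?expn_gt0 //; lia.
Qed.

Lemma delta_addn_le B n k D M : 1 < B -> 0 < n ->
  n * 64 ^ M <= 127 ^ M * B ^ D -> 127 * B ^ k <= M -> delta B n + k <= D + M.
Proof.
move=> B_gt1 n_gt0 n_le kM; have B_gt0 := ltnW B_gt1.
have M_gt0 : 0 < M by apply: leq_trans kM; rewrite muln_gt0 expn_gt0 B_gt0.
rewrite /delta addSn -(ltn_exp2l _ _ B_gt1) expnD.
apply: leq_ltn_trans (leq_mul (trunc_logP B_gt1 n_gt0) (leqnn _)) _.
rewrite -(ltn_pmul2r (_ : 0 < 64 ^ M)) ?expn_gt0 // mulnAC.
apply: leq_ltn_trans (leq_mul n_le (leqnn _)) _.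
rewrite (mulnC (127 ^ M)) expnD -!mulnA ltn_pmul2l ?expn_gt0 ?B_gt0 //.
apply: leq_trans (expn127_mul_lt kM) _.
by rewrite -expnMn leq_exp2r // (_ : 128 = 2 * 64) // leq_mul2r B_gt1.
Qed.

Section DigitPrimes.

Variables B J : nat.
Hypothesis B_gt1 : 1 < B.
Hypothesis J_large : 2 ^ 17 <= B ^ J.

Lemma exists_digit_prime i :
  exists p, [&& prime p, B ^ (J + i) < p & 64 * p <= 127 * B ^ (J + i)].
Proof.
apply/exists_prime_digits/(leq_trans J_large).
by rewrite leq_pexp2l ?leq_addr // ltnW.
Qed.

Definition digit_prime i := xchoose (exists_digit_prime i).

Lemma digit_primeP i : [&& prime (digit_prime i), B ^ (J + i) < digit_prime i
  & 64 * digit_prime i <= 127 * B ^ (J + i)].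
Proof. exact: (xchooseP (exists_digit_prime i)). Qed.

Lemma delta_digit_prime i : delta B (digit_prime i) = (J + i).+1.
Proof.
have /and3P[_ lo hi] := digit_primeP i; apply: delta_eq; rewrite // ltnW //= expnS.
by move: hi; set X := B ^ (J + i); nia.
Qed.

Definition digit_prod M := \prod_(0 <= i < M) digit_prime i.

Lemma digit_prod_le M :
  digit_prod M * 64 ^ M <= 127 ^ M * B ^ (\sum_(0 <= i < M) (J + i)).
Proof.
have const c : c ^ M = \prod_(0 <= i < M) c by rewrite prod_nat_const_nat subn0.
rewrite /digit_prod expn_sum !const -!big_split; apply: leq_prod => i _.
by have /and3P[_ _ hi] := digit_primeP i; rewrite /= mulnC.
Qed.

Lemma digit_prod_gt M : 0 < M -> B ^ J < digit_prod M.
Proof.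
case: M => // M _; have /and3P[_ lo _] := digit_primeP 0.
rewrite /digit_prod big_ltn // -[J]addn0 (leq_trans lo) // leq_pmulr //.
by apply: prodn_gt0 => i; case/and3P: (digit_primeP i) => /prime_gt0.
Qed.

Lemma phi_digit_prod M : \sum_(0 <= i < M) (J + i) + M <= phi B (digit_prod M).
Proof.
set s := [seq digit_prime i | i <- index_iota 0 M].
have s_uniq : uniq s.
  rewrite map_inj_in_uniq ?iota_uniq // => i j _ _ /(congr1 (delta B)).
  by rewrite !delta_digit_prime => /succn_inj/addnI.
have s_prime : all prime s.
  by apply/allP => _ /mapP[i _ ->]; case/and3P: (digit_primeP i).
have := sum_delta_le_phi_prod B s_uniq s_prime; rewrite !big_map.
rewrite (eq_bigr _ (fun i _ => delta_digit_prime i)).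
under eq_bigr do rewrite -addn1.
by rewrite big_split sum_nat_const_nat subn0 muln1.
Qed.

End DigitPrimes.

Unset Implicit Arguments.
Import GRing.Theory Num.Theory.
Local Open Scope ring_scope.

Theorem proposition5 (B : nat) (hB : (2 <= B)%N) (k : nat) (hk : (0 < k)%N) :
  forall N : nat, exists n : nat, (N < n)%N /\ h B n <= - (k%:Z).
Proof.
move=> N; pose J := (N + 17)%N.
have exp2_le : (2 ^ J <= B ^ J)%N by rewrite leq_exp2r // addn_gt0 orbT.
have J_large : (2 ^ 17 <= B ^ J)%N.
  by apply: leq_trans exp2_le; rewrite leq_pexp2l // leq_addl.
have N_lt : (N < B ^ J)%N.
  apply: leq_trans exp2_le; rewrite (leq_trans (ltn_expl N (isT : (1 < 2)%N))) //.
  by rewrite leq_pexp2l ?leq_addr.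
pose M := (127 * B ^ k)%N.
have M_gt0 : (0 < M)%N by rewrite muln_gt0 expn_gt0 (ltnW hB).
have n_gt := digit_prod_gt hB J_large M_gt0.
exists (digit_prod hB J_large M); split; first exact: ltn_trans n_gt.
have n_gt0 := leq_ltn_trans (leq0n _) n_gt.
have := delta_addn_le hB n_gt0 (digit_prod_le hB J_large M) (leqnn M).
have := phi_digit_prod hB J_large M.
by rewrite /h; lia.
Qed.
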